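(* In the setting below (the $k$-graph $\Lambda$ determined by isometric intertwiners $T_e$), for all $m,n\in\mathbb N^k$ the family $$\{T_\lambda T_\mu^*:\ \lambda\in\Lambda^m,\ \mu\in\Lambda^n,\ r(\lambda)=r(\mu)=\iota,\ s(\lambda)=s(\mu)\}$$ is a basis of the vector space $\mathrm{Hom}(\rho^n,\rho^m)$, and each $T_\lambda T_\mu^*$ in it is a partial isometry.
   Context: Setting: $G$ compact group, $\rho_1,\dots,\rho_k$ finite-dimensional unitary representations on $\mathcal H_1,\dots,\mathcal H_k$; $\mathcal H^n=\mathcal H_1^{\otimes n_1}\otimes\cdots\otimes\mathcal H_k^{\otimes n_k}$, $\rho^n=\rho_1^{\otimes n_1}\otimes\cdots\otimes\rho_k^{\otimes n_k}$, tensor factors always reordered canonically via flips; $\mathrm{Hom}(\sigma,\tau)$ denotes intertwiners. Let $R$ be the set of equivalence classes of irreducible representations occurring as subrepresentations of some $\rho^n$; for $\pi\in R$ fix a representative on $\mathcal H_\pi$, and let $\iota\in R$ be the trivial representation, $\mathcal H_\iota=\mathbb C$. Let $\Lambda^0=R$ and, for each $i$, let $\Lambda^{\varepsilon_i}$ be a set of edges with $|\{e\in\Lambda^{\varepsilon_i}:s(e)=v,r(e)=w\}|=\dim\mathrm{Hom}(v,w\otimes\rho_i)$. For each $e\in\Lambda^{\varepsilon_i}$ choose an isometric intertwiner $T_e\in\mathrm{Hom}(s(e),r(e)\otimes\rho_i)$, $T_e:\mathcal H_{s(e)}\to\mathcal H_{r(e)}\otimes\mathcal H_i$, such that for every $\pi\in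 R$, $\mathcal H_\pi\otimes\mathcal H_i=\bigoplus_{e\in\Lambda^{\varepsilon_i},r(e)=\pi}T_eT_e^*(\mathcal H_\pi\otimes\mathcal H_i)$ (orthogonal sum). Assume these choices determine a $k$-graph: for all $i\ne j$ and $e\in\Lambda^{\varepsilon_i}$, $f\in\Lambda^{\varepsilon_j}$ with $s(e)=r(f)$ there is a unique pair $f'\in\Lambda^{\varepsilon_j}$, $e'\in\Lambda^{\varepsilon_i}$ with $r(f')=r(e)$, $s(f')=r(e')$, $s(e')=s(f)$ and $(T_e\otimes I_{\mathcal H_j})T_f=(T_{f'}\otimes I_{\mathcal H_i})T_{e'}$ as maps into $\mathcal H_{r(e)}\otimes\mathcal H^{\varepsilon_i+\varepsilon_j}$, and the factorization rules $ef=f'e'$ so obtained satisfy the associativity condition, so that they define a $k$-graph $\Lambda$ (row-finite, no sources) with vertices $R$ and these edges. For a path $\lambda\in\Lambda^n$ written as a composition of edges $\lambda=e_1e_2\cdots e_p$, $T_\lambda:\mathcal H_{s(\lambda)}\to\mathcal H_{r(\lambda)}\otimes\mathcal H^n$ is the composition $(T_{e_1}\otimes I)\circ\cdots\circ(T_{e_{p-1}}\otimes I)\circ T_{e_p}$ (independent of the factorization by assumption); when $r(\lambda)=\iota$ this is a map $\mathcal H_{s(\lambda)}\to\mathcal H^n$, and $\mathcal H^n=\bigoplus_{\lambda\in\iota\Lambda^n}T_\lambda T_\lambda^*(\mathcal H^n)$. *)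

From HB Require Import structures.
From mathcomp Require Import all_boot all_order all_algebra.
From mathcomp Require Import all_classical all_reals.
From mathcomp Require Import topology normedtype.
From mathcomp Require Import complex mxtens.
Import numFieldNormedType.Exports.

Set Implicit Arguments.
Unset Strict Implicit.
Unset Printing Implicit Defensive.

Import Order.TTheory GRing.Theory Num.Theory.
Local Open Scope ring_scope.

Section Setting.

Variable R : realType.
Local Notation C := (R[i]).

Definition adjmx m n (A : 'M[C]_(m, n)) : 'M[C]_(n, m) := (map_mx Num.conj A)^T.

Definition partial_isometry m n (A : 'M[C]_(m, n)) : Prop :=
  A *m adjmx A *m A = A.

Variable G : topologicalType.
Variables (mul : G -> G -> G) (inv : G -> G) (one : G).

Definition compact_group : Prop :=
  [/\ (forall x y z, mul x (mul y z) = mul (mul x y) z),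
      (forall x, mul one x = x),
      (forall x, mul (inv x) x = one) &
      [/\ continuous (fun p : G * G => mul p.1 p.2),
      continuous inv &
      compact [set: G]]].

(* Finite-dimensional representations on C^d (matrices act on column vectors). *)
Definition is_rep d (pi : G -> 'M[C]_d) : Prop :=
  (forall g h, pi (mul g h) = pi g *m pi h) /\ pi one = 1%:M.

Definition unitary_rep d (pi : G -> 'M[C]_d) : Prop :=
  is_rep pi /\ forall g, pi g *m adjmx (pi g) = 1%:M.

Definition continuous_rep d (pi : G -> 'M[C]_d) : Prop :=
  forall a b, continuous (fun g => complex.Re (pi g a b)) /\
              continuous (fun g => complex.Im (pi g a b)).

Definition intw n m (sig : G -> 'M[C]_n) (tau : G -> 'M[C]_m) (X : 'M[C]_(m, n)) : Prop :=
  forall g, tau g *m X = X *m sig g.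

Definition rep_equiv n m (sig : G -> 'M[C]_n) (tau : G -> 'M[C]_m) : Prop :=
  exists (X : 'M[C]_(m, n)) (Y : 'M[C]_(n, m)),
    [/\ intw sig tau X, intw tau sig Y, X *m Y = 1%:M & Y *m X = 1%:M].

Definition irreducible d (pi : G -> 'M[C]_d) : Prop :=
  (0 < d)%N /\
  forall W : {vspace 'cV[C]_d},
    (forall g w, w \in W -> pi g *m w \in W) -> W = 0%VS \/ W = fullv.

Definition hom_basis n m (sig : G -> 'M[C]_n) (tau : G -> 'M[C]_m)
    (X : seq 'M[C]_(m, n)) : Prop :=
  [/\ (forall A, A \in X -> intw sig tau A),
      (forall A, intw sig tau A -> A \in <<X>>%VS) &
      free X].

Definition hom_dim n m (sig : G -> 'M[C]_n) (tau : G -> 'M[C]_m) (d : nat) : Prop :=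
  exists X : seq 'M[C]_(m, n), size X = d /\ hom_basis sig tau X.

Variable k : nat.
Variable dh : 'I_k -> nat.
Variable rho : forall i : 'I_k, G -> 'M[C]_(dh i).

(* The list of tensor factors of H^n = H_1^{n_1} (x) ... (x) H_k^{n_k}. *)
Definition colors (m : 'I_k -> nat) : seq 'I_k :=
  flatten [seq nseq (m i) i | i <- enum 'I_k].

Definition dims (s : seq 'I_k) : nat := foldr (fun c d => (dh c * d)%N) 1%N s.

(* Kronecker product rho_{c_1} (x) ... (x) rho_{c_p} (row-major indexing,
   as for tensmx). *)
Fixpoint tens (s : seq 'I_k) : G -> 'M[C]_(dims s) :=
  match s return G -> 'M[C]_(dims s) with
  | [::] => fun _ => 1%:M
  | c :: s' => fun g => rho c g *t tens s' g
  end.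

Definition Dim (m : 'I_k -> nat) : nat := dims (colors m).
Definition rhopow (m : 'I_k -> nat) : G -> 'M[C]_(Dim m) := tens (colors m).

Definition occurs_in d (sig : G -> 'M[C]_d) (m : 'I_k -> nat) : Prop :=
  exists X : 'M[C]_(Dim m, d), intw sig (rhopow m) X /\ \rank X = d.

Variable V : Type.
Variable dim : V -> nat.
Variable pi : forall v : V, G -> 'M[C]_(dim v).
Variable iota : V.

Definition vertices_ok : Prop :=
  [/\ (forall v, [/\ unitary_rep (pi v), irreducible (pi v) &
                     exists m, occurs_in (pi v) m]),
      (forall v w, v <> w -> ~ rep_equiv (pi v) (pi w)),
      (forall d (sig : G -> 'M[C]_d), is_rep sig -> irreducible sig ->
          (exists m, occurs_in sig m) -> exists v, rep_equiv sig (pi v)),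
      dim iota = 1%N &
      (forall g, pi iota g = 1%:M)].

Variable E : eqType.
Variables (src rng : E -> V) (col : E -> 'I_k).
Variable T : forall e : E, 'M[C]_(dim (rng e) * dh (col e), dim (src e)).

(* Entry of a matrix accessed through natural-number indices (0 outside). *)
Definition nent m n (A : 'M[C]_(m, n)) (i j : nat) : C :=
  match (insub i : option 'I_m), (insub j : option 'I_n) with
  | Some i', Some j' => A i' j'
  | _, _ => 0
  end.

(* Tent e a x c = < (a (x) x) | T_e | c >, a in H_{r(e)}, x in H_{col e}, c in H_{s(e)} *)
Definition Tent (e : E) (a x c : nat) : C := nent (T e) (a * dh (col e) + x)%N c.

Definition edges_ok : Prop :=
  [/\ (forall e, adjmx (T e) *m T e = 1%:M /\
                 intw (pi (src e)) (fun g => pi (rng e) g *t rho (col e) g) (T e)),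
      (* H_v (x) H_i is the orthogonal sum of the ranges of T_e T_e^*, r(e) = v, e of colour i *)
      (forall v i, exists s : seq E,
         [/\ uniq s,
             (forall e, e \in s <-> rng e = v /\ col e = i),
             (forall e f, e \in s -> f \in s -> e <> f ->
                forall c c', (c < dim (src e))%N -> (c' < dim (src f))%N ->
                \sum_(a < dim v) \sum_(x < dh i) (Tent e a x c)^* * Tent f a x c' = 0) &
             (forall a x a' x', (a < dim v)%N -> (x < dh i)%N ->
                (a' < dim v)%N -> (x' < dh i)%N ->
                \sum_(e <- s) \sum_(c < dim (src e)) Tent e a x c * (Tent e a' x' c)^*
                  = ((a == a') && (x == x'))%:R)]) &
      (forall v w i, exists s : seq E,
         [/\ uniq s,
             (forall e, e \in s <-> [/\ src e = v, rng e = w & col e = i]) &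
             hom_dim (pi v) (fun g => pi w g *t rho i g) (size s)])].

(* The factorisation rule e f = f' e' (e, e' of one colour, f, f' of another):
   (T_e (x) I) T_f = (T_{f'} (x) I) T_{e'} after reordering tensor factors. *)
Definition fact (e f f' e' : E) : Prop :=
  [/\ col f' = col f, col e' = col e, rng f' = rng e &
    [/\ src f' = rng e', src e' = src f &
      forall a x y b, (a < dim (rng e))%N -> (x < dh (col e))%N ->
        (y < dh (col f))%N -> (b < dim (src f))%N ->
        \sum_(c < dim (src e)) Tent e a x c * Tent f c y b
        = \sum_(c < dim (src f')) Tent f' a y c * Tent e' c x b]].

Definition kgraph_ok : Prop :=
  (forall e f, col e <> col f -> src e = rng f ->
     exists f' e', fact e f f' e' /\
       forall f'' e'', fact e f f'' e'' -> f'' = f' /\ e'' = e') /\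
  (* associativity of the factorisation rules *)
  (forall e f g, col e <> col f -> col f <> col g -> col e <> col g ->
     src e = rng f -> src f = rng g ->
     forall f1 e1 g1 e2 g2 f2 g1' f1' g2' e1' f2' e2',
       fact e f f1 e1 -> fact e1 g g1 e2 -> fact f1 g1 g2 f2 ->
       fact f g g1' f1' -> fact e g1' g2' e1' -> fact e1' f1' f2' e2' ->
       [/\ g2 = g2', f2 = f2' & e2 = e2']).

(* A path lambda = e_1 e_2 ... e_p (r(lambda) = r(e_1), s(e_j) = r(e_{j+1})) *)
Fixpoint chain (v : V) (p : seq E) : Prop :=
  match p with
  | [::] => True
  | e :: p' => rng e = v /\ chain (src e) p'
  end.

Definition psrc (v : V) (p : seq E) : V := last v [seq src e | e <- p].

(* lambda in iota Lambda^m, written in its (unique) factorisation with the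
   edges of colour 1 first, then colour 2, ..., then colour k. *)
Definition iota_path (m : 'I_k -> nat) (p : seq E) : Prop :=
  [seq col e | e <- p] = colors m /\ chain iota p.

(* Tp p a X b = < a (x) X | T_p | b > where
   T_{e p'} = (T_e (x) I) T_{p'} and T_[::] = identity. *)
Fixpoint Tp (p : seq E) : nat -> nat -> nat -> C :=
  match p with
  | [::] => fun a X b => ((a == b) && (X == 0%N))%:R
  | e :: p' => fun a X b =>
      \sum_(c < dim (src e))
        Tent e a (X %/ dims [seq col e | e <- p']) c *
        Tp p' c (X %% dims [seq col e | e <- p']) b
  end.

(* T_lambda T_mu^* : H^n -> H^m, for lambda, mu with range iota *)
Definition TT (m n : 'I_k -> nat) (lam mu : seq E) : 'M[C]_(Dim m, Dim n) :=
  \matrix_(X < Dim m, Y < Dim n)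
    \sum_(b < dim (psrc iota lam)) Tp lam 0 X b * (Tp mu 0 Y b)^*.

End Setting.

From HB Require Import structures.
From mathcomp Require Import all_boot all_order all_algebra.
From mathcomp Require Import all_classical all_reals.
From mathcomp Require Import topology normedtype.
From mathcomp Require Import complex mxtens ring.
Import numFieldNormedType.Exports.

Set Implicit Arguments.
Unset Strict Implicit.
Unset Printing Implicit Defensive.

Import Order.TTheory GRing.Theory Num.Theory.
Local Open Scope ring_scope.

(* For paths
   [p] into a vertex [v] (edges listed in colour order) we then prove, by
   induction on the path, that
   - the [T_p] are isometries with pairwise orthogonal ranges ([path_orth]),
   - their range projections sum to the identity ([paths_complete]),
   - [T_p] intertwines [π_{s(p)}] with [π_v ⊗ ρ^s] ([path_intw]).
   Specialised to [v = ι], these make [T_λ T_μ^*] an intertwiner and a partial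
   isometry.  An intertwiner [A] equals [Σ_{λ,μ} T_λ (T_λ^* A T_μ) T_μ^*], and
   by Schur's lemma the middle factor is a scalar when [s(λ) = s(μ)] and zero
   otherwise, so the family spans; compressing by [T_λ0^* (.) T_μ0] isolates
   single coefficients, so it is free. *)

Section NatEntries.
Variable R : realType.
Local Notation C := (R[i]).

Lemma nentE m n (A : 'M[C]_(m, n)) (i : 'I_m) (j : 'I_n) : nent A i j = A i j.
Proof.
rewrite /nent; case: insubP => [i' _ Ei|]; last by move=> /negP[]; exact: ltn_ord.
case: insubP => [j' _ Ej|]; last by move=> /negP[]; exact: ltn_ord.
by congr (A _ _); apply: val_inj.
Qed.

Lemma nentE_lt m n (A : 'M[C]_(m, n)) i j (Hi : (i < m)%N) (Hj : (j < n)%N) :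
  nent A i j = A (Ordinal Hi) (Ordinal Hj).
Proof. exact: (nentE A (Ordinal Hi) (Ordinal Hj)). Qed.

Lemma nent_out m n (A : 'M[C]_(m, n)) i j :
  (m <= i)%N || (n <= j)%N -> nent A i j = 0.
Proof.
rewrite /nent; case: insubP => [i' Hi _|//]; case: insubP => [j' Hj _|//].
by rewrite leqNgt Hi leqNgt Hj.
Qed.

Lemma eq_nent m n (A B : 'M[C]_(m, n)) :
  (forall i j, (i < m)%N -> (j < n)%N -> nent A i j = nent B i j) -> A = B.
Proof. by move=> H; apply/matrixP=> i j; rewrite -!nentE; apply: H. Qed.

(* Every entry function built from a matrix operation vanishes out of range,
   so it suffices to compare it in range. *)
Lemma nent_ext m n (A : 'M[C]_(m, n)) (f : nat -> nat -> C) :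
  (forall i j, (m <= i)%N || (n <= j)%N -> f i j = 0) ->
  (forall (i : 'I_m) (j : 'I_n), A i j = f i j) -> forall i j, nent A i j = f i j.
Proof.
move=> f_out Af i j; case: (ltnP i m) => Hi; last by rewrite nent_out ?f_out ?Hi.
case: (ltnP j n) => Hj; last by rewrite nent_out ?f_out ?Hj ?orbT.
by rewrite nentE_lt Af.
Qed.

Lemma nent_mul m n p (A : 'M[C]_(m, n)) (B : 'M[C]_(n, p)) i l :
  nent (A *m B) i l = \sum_(j < n) nent A i j * nent B j l.
Proof.
move: i l; apply: nent_ext => [i l /orP[Hi|Hl]|i l].
- by rewrite big1 // => j _; rewrite nent_out ?Hi ?mul0r.
- by rewrite big1 // => j _; rewrite (nent_out B) ?Hl ?orbT ?mulr0.
- by rewrite mxE; apply: eq_bigr => j _; rewrite !nentE.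
Qed.

Lemma nent_tens m n p q (A : 'M[C]_(m, n)) (B : 'M[C]_(p, q)) i j :
  (i < m * p)%N -> (j < n * q)%N ->
  nent (A *t B) i j = nent A (i %/ p) (j %/ q) * nent B (i %% p) (j %% q).
Proof. by move=> Hi Hj; rewrite nentE_lt mxE -!nentE. Qed.

Lemma nent1 n i j : nent (1%:M : 'M[C]_n) i j = ((i == j) && (i < n)%N)%:R.
Proof.
move: i j; apply: nent_ext => [i j /orP[Hi|Hj]|i j]; last by rewrite mxE ltn_ord andbT.
  by rewrite leqNgt in Hi; rewrite (negbTE Hi) andbF.
case: eqP => // -> /=; by rewrite ltnNge Hj.
Qed.

Lemma nent_adj m n (A : 'M[C]_(m, n)) i j : nent (adjmx A) i j = (nent A j i)^*.
Proof.
move: i j; apply: nent_ext => [i j Hij|i j]; last by rewrite /adjmx !mxE nentE.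
by rewrite nent_out ?conjC0 // orbC.
Qed.

Lemma nent_scale m n (A : 'M[C]_(m, n)) c i j : nent (c *: A) i j = c * nent A i j.
Proof.
move: i j; apply: nent_ext => [i j Hij|i j]; last by rewrite mxE nentE.
by rewrite nent_out ?mulr0.
Qed.

Lemma nent_sum m n (I : Type) (r : seq I) (P : pred I) (F : I -> 'M[C]_(m, n)) i j :
  nent (\sum_(x <- r | P x) F x) i j = \sum_(x <- r | P x) nent (F x) i j.
Proof.
move: i j; apply: nent_ext => [i j Hij|i j]; last first.
  by rewrite summxE; apply: eq_bigr => x _; rewrite nentE.
by rewrite big1 // => x _; rewrite nent_out.
Qed.

Lemma nent0 m n i j : nent (0 : 'M[C]_(m, n)) i j = 0.
Proof. by rewrite -(scale0r (0 : 'M[C]_(m, n))) nent_scale mul0r. Qed.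

End NatEntries.

Section Adjoint.
Variable R : realType.
Local Notation C := (R[i]).

Lemma adjmxK m n (A : 'M[C]_(m, n)) : adjmx (adjmx A) = A.
Proof. by apply/matrixP=> i j; rewrite /adjmx !mxE conjCK. Qed.

Lemma adjmxM m n p (A : 'M[C]_(m, n)) (B : 'M[C]_(n, p)) :
  adjmx (A *m B) = adjmx B *m adjmx A.
Proof.
apply/matrixP=> i j; rewrite /adjmx !mxE rmorph_sum; apply: eq_bigr => l _.
by rewrite !mxE rmorphM mulrC.
Qed.

Lemma adjmx1 n : adjmx (1%:M : 'M[C]_n) = 1%:M.
Proof. by apply/matrixP=> i j; rewrite /adjmx !mxE eq_sym rmorph_nat. Qed.

Lemma adjmx_tens m n p q (A : 'M[C]_(m, n)) (B : 'M[C]_(p, q)) :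
  adjmx (A *t B) = adjmx A *t adjmx B.
Proof. by apply/matrixP=> i j; rewrite /adjmx !mxE rmorphM. Qed.

Lemma adjmx_mul_diag m n (A : 'M[C]_(m, n)) j :
  (adjmx A *m A) j j = \sum_(a < m) (A a j)^* * A a j.
Proof. by rewrite mxE; apply: eq_bigr => a _; rewrite /adjmx !mxE. Qed.

End Adjoint.

Lemma tensmx11 (F : comPzRingType) m n :
  (1%:M : 'M[F]_m) *t (1%:M : 'M[F]_n) = 1%:M.
Proof.
apply/matrixP=> i j; case: (mxtens_indexP i) => i1 i2; case: (mxtens_indexP j) => j1 j2.
rewrite tensmxE !mxE -natrM mulnb; congr (_%:R).
by rewrite (inj_eq (can_inj (@mxtens_indexK m n))) xpair_eqE.
Qed.

Lemma ltn_tens_index a x m n : (a < m)%N -> (x < n)%N -> (a * n + x < m * n)%N.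
Proof. by move=> Ha Hx; exact: (mxtens_index_proof (Ordinal Ha, Ordinal Hx)). Qed.

Lemma mxtens_indexE m n (x : 'I_m) (y : 'I_n) :
  nat_of_ord (mxtens_index (x, y)) = (x * n + y)%N.
Proof. by []. Qed.

Lemma divn_tens_index a x n : (x < n)%N -> ((a * n + x) %/ n = a)%N.
Proof. by move=> Hx; rewrite divnMDl ?divn_small ?addn0 //; case: n Hx. Qed.

Lemma modn_tens_index a x n : (x < n)%N -> ((a * n + x) %% n = x)%N.
Proof. by move=> Hx; rewrite modnMDl modn_small. Qed.

Section IndexSums.

Lemma sum_tens_index (M : nmodType) m n (F : 'I_(m * n) -> M) :
  \sum_(X < m * n) F X = \sum_(x < m) \sum_(y < n) F (mxtens_index (x, y)).
Proof.
have bij : bijective (@mxtens_index m n).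
  by exists (@mxtens_unindex m n); [apply: mxtens_indexK | apply: mxtens_unindexK].
rewrite pair_big (reindex _ (onW_bij _ bij)) /=.
by apply: eq_bigr => -[x y] _.
Qed.

Variable R : realType.
Local Notation C := (R[i]).

Lemma sum_delta_l n c (f : nat -> C) : (c < n)%N ->
  \sum_(c' < n) ((c == c' :> nat)%:R * f c') = f c.
Proof.
move=> Hc; rewrite (bigD1 (Ordinal Hc)) //= eqxx mul1r big1 ?addr0 // => j Hj.
have -> : (c == j :> nat) = false.
  by apply/negP => /eqP E; move: Hj; rewrite -val_eqE /= E eqxx.
by rewrite mul0r.
Qed.

Lemma sum_delta_r n c (f : nat -> C) : (c < n)%N ->
  \sum_(c' < n) (f c' * (c' == c :> nat)%:R) = f c.
Proof.
move=> Hc; rewrite -(sum_delta_l f Hc).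
by apply: eq_bigr => j _; rewrite mulr_natl mulr_natr eq_sym.
Qed.

Lemma sum_mulA nc nb (f w : nat -> C) (h : nat -> nat -> C) :
  \sum_(c < nc) f c * (\sum_(b < nb) h c b * w b)
  = \sum_(b < nb) (\sum_(c < nc) f c * h c b) * w b.
Proof.
under eq_bigr => c _ do rewrite mulr_sumr.
rewrite exchange_big; apply: eq_bigr => b _; rewrite mulr_suml.
by apply: eq_bigr => c _; rewrite mulrA.
Qed.

(* A product [(P ⊗ Q ⊗ S) (A ⊗ 1) B] of index functions, regrouped as
   [((P ⊗ Q) A ⊗ S) B]. *)
Lemma sum_tensor_compose (na nx ny nc : nat) (P Q S : nat -> C)
    (A : nat -> nat -> nat -> C) (B : nat -> nat -> C) :
  \sum_(a < na) \sum_(x < nx) \sum_(y < ny) (P a * Q x * S y) * (\sum_(c < nc) A a x c * B c y)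
  = \sum_(c < nc) (\sum_(a < na) \sum_(x < nx) P a * Q x * A a x c)
      * (\sum_(y < ny) S y * B c y).
Proof.
transitivity (\sum_(a < na) \sum_(x < nx) \sum_(y < ny) \sum_(c < nc)
   (P a * Q x * A a x c) * (S y * B c y)).
  apply: eq_bigr => a _; apply: eq_bigr => x _; apply: eq_bigr => y _.
  rewrite mulr_sumr; apply: eq_bigr => c _; ring.
symmetry.
transitivity (\sum_(c < nc) \sum_(a < na) \sum_(x < nx) \sum_(y < ny)
   (P a * Q x * A a x c) * (S y * B c y)).
  apply: eq_bigr => c _; rewrite mulr_suml; apply: eq_bigr => a _.
  rewrite mulr_suml; apply: eq_bigr => x _; by rewrite mulr_sumr.
rewrite exchange_big; apply: eq_bigr => a _.
rewrite exchange_big; apply: eq_bigr => x _.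
by rewrite exchange_big.
Qed.

(* The inner product of two composites [A B] and [A' B'] over the index pair
   [(a, x), y], written through the inner products of the factors. *)
Lemma sum_inner_compose (na nx ny nc nc' : nat) (A A' : nat -> nat -> nat -> C)
    (B B' : nat -> nat -> C) :
  \sum_(a < na) \sum_(x < nx) \sum_(y < ny)
    (\sum_(c < nc) A a x c * B c y)^* * (\sum_(c < nc') A' a x c * B' c y)
  = \sum_(c < nc) \sum_(c' < nc')
      (\sum_(a < na) \sum_(x < nx) (A a x c)^* * A' a x c')
      * (\sum_(y < ny) (B c y)^* * B' c' y).
Proof.
transitivity (\sum_(a < na) \sum_(x < nx) \sum_(y < ny) \sum_(c < nc) \sum_(c' < nc')
   ((A a x c)^* * A' a x c') * ((B c y)^* * B' c' y)).
  apply: eq_bigr => a _; apply: eq_bigr => x _; apply: eq_bigr => y _.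
  rewrite rmorph_sum big_distrlr /=; apply: eq_bigr => c _; apply: eq_bigr => c' _.
  by rewrite rmorphM /=; ring.
symmetry.
transitivity (\sum_(c < nc) \sum_(c' < nc') \sum_(a < na) \sum_(x < nx) \sum_(y < ny)
   ((A a x c)^* * A' a x c') * ((B c y)^* * B' c' y)).
  apply: eq_bigr => c _; apply: eq_bigr => c' _.
  rewrite mulr_suml; apply: eq_bigr => a _; rewrite mulr_suml; apply: eq_bigr => x _.
  by rewrite mulr_sumr.
under eq_bigr => c _ do rewrite exchange_big.
rewrite exchange_big; apply: eq_bigr => a _.
under eq_bigr => c _ do rewrite exchange_big.
rewrite exchange_big; apply: eq_bigr => x _.
under eq_bigr => c _ do rewrite exchange_big.
by rewrite exchange_big.
Qed.

(* A sum over a family of composites [al B_p] times the adjoint of [al' B'_p],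
   written through the sums over the family of the second factors. *)
Lemma sum_outer_compose (I : Type) (L : seq I) (nb : I -> nat) (nc : nat)
    (al al' : nat -> C) (B B' : I -> nat -> nat -> C) :
  \sum_(p <- L) \sum_(b < nb p)
     (\sum_(c < nc) al c * B p c b) * (\sum_(c < nc) al' c * B' p c b)^*
  = \sum_(c < nc) \sum_(c' < nc) (al c * (al' c')^*) *
      (\sum_(p <- L) \sum_(b < nb p) B p c b * (B' p c' b)^*).
Proof.
transitivity (\sum_(p <- L) \sum_(b < nb p) \sum_(c < nc) \sum_(c' < nc)
   (al c * (al' c')^*) * (B p c b * (B' p c' b)^*)).
  apply: eq_bigr => p _; apply: eq_bigr => b _.
  rewrite rmorph_sum big_distrlr /=; apply: eq_bigr => c _; apply: eq_bigr => c' _.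
  by rewrite rmorphM /=; ring.
symmetry.
transitivity (\sum_(c < nc) \sum_(c' < nc) \sum_(p <- L) \sum_(b < nb p)
   (al c * (al' c')^*) * (B p c b * (B' p c' b)^*)).
  apply: eq_bigr => c _; apply: eq_bigr => c' _.
  rewrite mulr_sumr; apply: eq_bigr => p _; by rewrite mulr_sumr.
under eq_bigr => c _ do rewrite exchange_big.
rewrite exchange_big; apply: eq_bigr => p _.
under eq_bigr => c _ do rewrite exchange_big.
by rewrite exchange_big.
Qed.

End IndexSums.

Section Schur.
Variable R : realType.
Local Notation C := (R[i]).
Variable G : topologicalType.
Variables (mul : G -> G -> G) (one : G).

Lemma intw_comp n m p (P : G -> 'M[C]_n) (Q : G -> 'M[C]_m) (S : G -> 'M[C]_p) X Y :
  intw P Q X -> intw Q S Y -> intw P S (Y *m X).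
Proof. by move=> HX HY g; rewrite mulmxA HY -mulmxA HX mulmxA. Qed.

Lemma intw_adj n m (P : G -> 'M[C]_n) (Q : G -> 'M[C]_m) X :
  (forall g, P g *m adjmx (P g) = 1%:M) -> (forall g, Q g *m adjmx (Q g) = 1%:M) ->
  intw P Q X -> intw Q P (adjmx X).
Proof.
move=> HP HQ HX g.
have adjX : adjmx X *m adjmx (Q g) = adjmx (P g) *m adjmx X by rewrite -!adjmxM HX.
have HQ' : adjmx (Q g) *m Q g = 1%:M by apply: mulmx1C; apply: HQ.
rewrite -[LHS]mulmx1 -HQ' mulmxA -(mulmxA _ (adjmx X)) adjX.
by rewrite !mulmxA HP mul1mx.
Qed.

(* Schur's lemma, first half: self-intertwiners of an irreducible
   representation are scalar (an eigenspace is invariant). *)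
Lemma schur_scalar d (P : G -> 'M[C]_d) (A : 'M[C]_d) :
  irreducible P -> intw P P A -> exists c, A = c%:M.
Proof.
case=> Hd Hirr HA.
have [c Hc] : exists c, eigenvalue A^T c.
  have : size (char_poly A^T) != 1%N by rewrite size_char_poly; case: (d) Hd.
  by move/closed_rootP => [c Hc]; exists c; rewrite eigenvalue_root_char.
exists c; move/eigenvalueP: Hc => [v Hv Hv0].
pose B := A - c%:M.
have BP g : B *m P g = P g *m B by rewrite /B mulmxBl mulmxBr -HA scalar_mxC.
pose W := lker (linfun (mulmx B : 'cV[C]_d -> 'cV[C]_d)).
have memW w : (w \in W) = (B *m w == 0) by rewrite memv_ker lfunE.
have : W = 0%VS \/ W = fullv.
  apply: Hirr => g w; rewrite !memW => /eqP Hw.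
  by rewrite mulmxA BP -mulmxA Hw mulmx0.
case=> HW.
  have : v^T \in W.
    rewrite memW.
    have -> : B *m v^T = (v *m B^T)^T by rewrite trmx_mul trmxK.
    have -> : B^T = A^T - c%:M by rewrite /B linearB /= tr_scalar_mx.
    by rewrite mulmxBr Hv mul_mx_scalar subrr trmx0.
  rewrite HW memv0 => /eqP /(congr1 trmx); rewrite trmxK trmx0 => v0.
  by move: Hv0; rewrite v0 eqxx.
have B0 : B = 0.
  apply/matrixP=> a b; rewrite mxE.
  have : delta_mx b (0 : 'I_1) \in W by rewrite HW memvf.
  by rewrite memW -colE => /eqP /matrixP /(_ a 0); rewrite !mxE.
by apply/eqP; rewrite -subr_eq0 -/B B0.
Qed.

Lemma matrix_neq0 m n (X : 'M[C]_(m, n)) : X != 0 -> exists a b, X a b != 0.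
Proof.
move=> X0; case: (boolP [exists a, exists b, X a b != 0]) => [/existsP[a /existsP[b Hab]]|H].
  by exists a, b.
case/negP: X0; apply/eqP/matrixP=> a b; rewrite mxE; apply/eqP/negPn.
by move: H; rewrite negb_exists => /forallP/(_ a); rewrite negb_exists => /forallP/(_ b).
Qed.

(* Schur's lemma, second half: a nonzero intertwiner between irreducible
   unitary representations makes them equivalent (it is a multiple of a unitary). *)
Lemma schur_equiv n m (P : G -> 'M[C]_n) (Q : G -> 'M[C]_m) (X : 'M[C]_(m, n)) :
  unitary_rep mul one P -> unitary_rep mul one Q -> irreducible P -> irreducible Q ->
  intw P Q X -> X != 0 -> rep_equiv P Q.
Proof.
move=> [_ uP] [_ uQ] iP iQ HX X0.
have HY := intw_adj uP uQ HX.
have [c Hc] := schur_scalar iP (intw_comp HX HY).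
have [c' Hc'] := schur_scalar iQ (intw_comp HY HX).
have [a [b Hab]] := matrix_neq0 X0.
have c0 : c != 0.
  apply: contraNneq Hab => c0.
  have col0 : \sum_(a' < m) (X a' b)^* * X a' b = 0.
    by rewrite -adjmx_mul_diag Hc mxE eqxx c0 mulr1n.
  have /eqP : (X a b)^* * X a b = 0.
    apply: (psumr_eq0P _ col0) => // i _.
    by rewrite -normCKC exprn_ge0.
  by rewrite mulf_eq0 conjC_eq0 orbb.
have cc : c = c'.
  have : X *m (adjmx X *m X) = (X *m adjmx X) *m X by rewrite mulmxA.
  rewrite Hc Hc' mul_mx_scalar mul_scalar_mx => /matrixP /(_ a b); rewrite !mxE.
  by move/(mulIf Hab).
exists X, (c^-1 *: adjmx X); split => //.
- by move=> g; rewrite -scalemxAr HY scalemxAl.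
- by rewrite -scalemxAr Hc' -cc scale_scalar_mx mulVf.
- by rewrite -scalemxAl Hc scale_scalar_mx mulVf.
Qed.

End Schur.

(* For a path [p] from [v] with colour
   sequence [s], [Tp p] is the matrix of [T_p : H_{s(p)} -> H_v ⊗ H^s] with the
   row index split as (a, X), a in H_v and X in H^s. *)
Section PathOperators.
Variable R : realType.
Local Notation C := (R[i]).
Variable G : topologicalType.
Variable k : nat.
Variable dh : 'I_k -> nat.
Variable rho : forall i : 'I_k, G -> 'M[C]_(dh i).
Variable V : Type.
Variable dim : V -> nat.
Variable pi : forall v : V, G -> 'M[C]_(dim v).
Variable E : eqType.
Variables (src rng : E -> V) (col : E -> 'I_k).
Variable T : forall e : E, 'M[C]_(dim (rng e) * dh (col e), dim (src e)).
Hypothesis HE : edges_ok rho pi T.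

Local Notation TP := (Tp T).
Local Notation TE := (Tent T).
Local Notation CH := (chain src rng).
Local Notation PS := (psrc src).
Local Notation DM := (dims dh).

Lemma Tp_out p : forall v a X b,
  (a < dim v)%N -> (dim (PS v p) <= b)%N -> TP p a X b = 0.
Proof.
elim: p => [|e p IH] v a X b Ha Hb /=.
  by case: eqP => [Eb|//]; subst b; move: (leq_trans Ha Hb); rewrite ltnn.
by rewrite big1 // => c _; rewrite (IH (src e)) ?mulr0.
Qed.

(* [T_{e p} = (T_e ⊗ I) T_p], read on the split row index [x * d + y]. *)
Lemma Tp_cons e p a x y b d : d = DM (map col p) -> (y < d)%N ->
  TP (e :: p) a (x * d + y) b = \sum_(c < dim (src e)) TE e a x c * TP p c y b.
Proof. by move=> -> Hy /=; rewrite divn_tens_index // modn_tens_index. Qed.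

Lemma edge_isometry e c c' : (c < dim (src e))%N -> (c' < dim (src e))%N ->
  \sum_(a < dim (rng e)) \sum_(x < dh (col e)) (TE e a x c)^* * TE e a x c'
  = (c == c')%:R.
Proof.
move=> Hc Hc'; case: HE => H1 _ _.
have := congr1 (fun M => nent M c c') (H1 e).1.
rewrite /= nent_mul nent1 Hc andbT => <-.
rewrite sum_tens_index; apply: eq_bigr => a _; apply: eq_bigr => x _.
by rewrite nent_adj.
Qed.

Lemma edge_intw e g a x c :
  (a < dim (rng e))%N -> (x < dh (col e))%N -> (c < dim (src e))%N ->
  \sum_(a' < dim (rng e)) \sum_(x' < dh (col e))
     nent (pi (rng e) g) a a' * nent (rho (col e) g) x x' * TE e a' x' c
  = \sum_(c' < dim (src e)) TE e a x c' * nent (pi (src e) g) c' c.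
Proof.
move=> Ha Hx Hc; case: HE => H1 _ _.
have := congr1 (fun M => nent M (a * dh (col e) + x) c) ((H1 e).2 g).
rewrite /= !nent_mul /Tent => <-.
rewrite sum_tens_index; apply: eq_bigr => a' _; apply: eq_bigr => x' _ /=.
by rewrite nent_tens ?ltn_tens_index // !divn_tens_index // !modn_tens_index.
Qed.

Lemma edge_decomposition v i : exists s : seq E,
  [/\ uniq s,
      (forall e, e \in s <-> rng e = v /\ col e = i),
      (forall e f, e \in s -> f \in s -> e <> f ->
         forall c c', (c < dim (src e))%N -> (c' < dim (src f))%N ->
         \sum_(a < dim v) \sum_(x < dh i) (TE e a x c)^* * TE f a x c' = 0) &
      (forall a x a' x', (a < dim v)%N -> (x < dh i)%N ->
         (a' < dim v)%N -> (x' < dh i)%N ->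
         \sum_(e <- s) \sum_(c < dim (src e)) TE e a x c * (TE e a' x' c)^*
         = ((a == a') && (x == x'))%:R)].
Proof. by case: HE => _ H _; apply: H. Qed.

Definition edges_into v i : seq E := proj1_sig (cid (edge_decomposition v i)).
Definition edges_intoP v i := proj2_sig (cid (edge_decomposition v i)).

Lemma edge_orth e f c c' : e <> f -> rng e = rng f -> col e = col f ->
  (c < dim (src e))%N -> (c' < dim (src f))%N ->
  \sum_(a < dim (rng e)) \sum_(x < dh (col e)) (TE e a x c)^* * TE f a x c' = 0.
Proof.
move=> ef Hr Hc Hce Hcf; have [_ Hm Ho _] := edges_intoP (rng e) (col e).
by apply: Ho => //; apply/Hm.
Qed.

Fixpoint paths (s : seq 'I_k) (v : V) : seq (seq E) :=
  match s with
  | [::] => [:: [::]]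
  | i :: s' => [seq e :: p | e <- edges_into v i, p <- paths s' (src e)]
  end.

Lemma mem_paths s : forall v p, p \in paths s v <-> CH v p /\ map col p = s.
Proof.
elim: s => [|i s IH] v p /=.
  by rewrite inE; split; [move/eqP-> | case: p => [|e p] // [_]].
have [_ Hm _ _] := edges_intoP v i.
split.
  move/allpairsPdep => [e [p' [He Hp' ->]]].
  have [Hr Hc] := (Hm e).1 He.
  have [Hch Hcol] := (IH (src e) p').1 Hp'.
  by rewrite /= Hr Hc Hcol.
case: p => [|e p] /=; first by move=> [_].
move=> [[Hr Hch] [Hc Hcol]].
apply/allpairsPdep; exists e, p; split => //; [exact/Hm | exact/IH].
Qed.

Lemma paths_uniq s : forall v, uniq (paths s v).
Proof.
elim: s => [|i s IH] v //=.
apply: allpairs_uniq_dep => //; first by have [] := edges_intoP v i.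
by move=> [e1 p1] [e2 p2] _ _ /= [<- <-].
Qed.

Lemma Tp_inner_cons e f p q b b' :
  col e = col f -> rng e = rng f -> map col p = map col q ->
  \sum_(a < dim (rng e)) \sum_(X < DM (map col (e :: p)))
     (TP (e :: p) a X b)^* * TP (f :: q) a X b'
  = \sum_(c < dim (src e)) \sum_(c' < dim (src f))
      (\sum_(a < dim (rng e)) \sum_(x < dh (col e)) (TE e a x c)^* * TE f a x c')
      * (\sum_(y < DM (map col p)) (TP p c y b)^* * TP q c' y b').
Proof.
move=> Hc Hr Hcol; rewrite -(sum_inner_compose _ _ _ _ _ (TE e) (TE f)
  (fun c y => TP p c y b) (fun c y => TP q c y b')).
apply: eq_bigr => a _; rewrite sum_tens_index; apply: eq_bigr => x _.
apply: eq_bigr => y _; rewrite mxtens_indexE !Tp_cons //.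
exact: (congr1 DM Hcol).
Qed.

Lemma path_orth p : forall v q b b', CH v p -> CH v q -> map col p = map col q ->
  (b < dim (PS v p))%N -> (b' < dim (PS v q))%N ->
  \sum_(a < dim v) \sum_(X < DM (map col p)) (TP p a X b)^* * TP q a X b'
  = ((p == q) && (b == b'))%:R.
Proof.
elim: p => [|e p IH] v [|f q] b b' //= => [_ _ _ Hb Hb'|].
  rewrite -(sum_delta_l (fun a => (a == b')%:R) Hb).
  by apply: eq_bigr => a _; rewrite big_ord1 !andbT conjC_nat eq_sym.
move=> [Hv Hp] [Hw Hq] [Hc Hcol] Hb Hb'; subst v.
have := Tp_inner_cons b b' Hc (esym Hw) Hcol; rewrite /= => ->.
case: (eqVneq e f) => [ef|nef]; last first.
  rewrite eqseq_cons (negbTE nef) big1 // => c _; rewrite big1 // => c' _.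
  by rewrite edge_orth ?mul0r //; apply/eqP.
subst f; under eq_bigr => c _ do under eq_bigr => c' _ do rewrite edge_isometry //.
rewrite eqseq_cons eqxx -(IH (src e) q b b') //.
apply: eq_bigr => c _.
by rewrite (sum_delta_l (fun c' => \sum_(y < DM (map col p)) (TP p c y b)^* * TP q c' y b')).
Qed.

Lemma Tp_outer_cons e s a a' X X' :
  \sum_(p <- paths s (src e)) \sum_(b < dim (PS (src e) p))
     TP (e :: p) a X b * (TP (e :: p) a' X' b)^*
  = \sum_(c < dim (src e)) \sum_(c' < dim (src e))
      (TE e a (X %/ DM s) c * (TE e a' (X' %/ DM s) c')^*) *
      (\sum_(p <- paths s (src e)) \sum_(b < dim (PS (src e) p))
         TP p c (X %% DM s) b * (TP p c' (X' %% DM s) b)^*).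
Proof.
rewrite -(sum_outer_compose _ _ _ (fun c => TE e a (X %/ DM s) c)
  (fun c => TE e a' (X' %/ DM s) c) (fun p c b => TP p c (X %% DM s) b)
  (fun p c b => TP p c (X' %% DM s) b)).
rewrite big_seq [RHS]big_seq; apply: eq_bigr => p /mem_paths [_ Hcol].
by apply: eq_bigr => b _ /=; rewrite Hcol.
Qed.

Lemma paths_complete s : forall v a a' X X', (a < dim v)%N -> (a' < dim v)%N ->
  (X < DM s)%N -> (X' < DM s)%N ->
  \sum_(p <- paths s v) \sum_(b < dim (PS v p)) TP p a X b * (TP p a' X' b)^*
  = ((a == a') && (X == X'))%:R.
Proof.
elim: s => [|i s IH] v a a' X X' Ha Ha' HX HX' /=.
  move: HX HX'; rewrite /dims /= !ltnS !leqn0 => /eqP-> /eqP->.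
  rewrite big_seq1 /= andbT [a == a']eq_sym -(sum_delta_l (fun b => (a' == b)%:R) Ha).
  by apply: eq_bigr => b _; rewrite !eqxx !andbT conjC_nat; congr (_ * _).
set d := DM s; set x := (X %/ d)%N; set x' := (X' %/ d)%N.
set y := (X %% d)%N; set y' := (X' %% d)%N.
have d0 : (0 < d)%N by move: HX; rewrite /d /=; case: (DM s) => //; rewrite muln0.
have Hx : (x < dh i)%N by rewrite ltn_divLR.
have Hx' : (x' < dh i)%N by rewrite ltn_divLR.
have Hy : (y < d)%N by rewrite ltn_mod.
have Hy' : (y' < d)%N by rewrite ltn_mod.
have split_eq : (X == X') = (x == x') && (y == y').
  by rewrite -xpair_eqE -(eq_addl_mul x x' Hy Hy') -!divn_eq.
(* the inner sums collapse by completeness at the sources of the edges *)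
have edge_term e : \sum_(p <- paths s (src e)) \sum_(b < dim (PS (src e) p))
    TP (e :: p) a X b * (TP (e :: p) a' X' b)^*
  = (\sum_(c < dim (src e)) TE e a x c * (TE e a' x' c)^*) * (y == y')%:R.
  rewrite Tp_outer_cons -/d -/x -/x' -/y -/y' mulr_suml; apply: eq_bigr => c _.
  rewrite -(sum_delta_r (fun c' => TE e a x c * (TE e a' x' c')^* * (y == y')%:R)
    (ltn_ord c)).
  apply: eq_bigr => c' _; rewrite IH // -mulnb natrM eq_sym.
  by rewrite [(c' == c)%:R * _]mulrC mulrA.
rewrite big_allpairs_dep /=.
under eq_bigr => e _ do rewrite edge_term.
have [_ _ _ Hsum] := edges_intoP v i.
by rewrite -mulr_suml Hsum // -natrM mulnb split_eq andbA.
Qed.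

Lemma path_intw p : forall v g a X b, CH v p ->
  (a < dim v)%N -> (X < DM (map col p))%N -> (b < dim (PS v p))%N ->
  \sum_(a' < dim v) \sum_(X' < DM (map col p))
     nent (pi v g) a a' * nent (tens rho (map col p) g) X X' * TP p a' X' b
  = \sum_(b' < dim (PS v p)) TP p a X b' * nent (pi (PS v p) g) b' b.
Proof.
elim: p => [|e p IH] v g a X b /=.
  move=> _ Ha; rewrite /dims /= ltnS leqn0 => /eqP -> Hb.
  transitivity (nent (pi v g) a b).
    rewrite -(sum_delta_r (fun a' => nent (pi v g) a a') Hb).
    by apply: eq_bigr => a' _; rewrite big_ord1 nent1 /= !andbT mulr1.
  rewrite -(sum_delta_l (fun b' => nent (pi v g) b' b) Ha).
  by apply: eq_bigr => b' _; rewrite andbT.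
move=> [<- Hch] Ha HX Hb; set d := DM (map col p).
have d0 : (0 < d)%N by move: HX; rewrite /d; case: (DM (map col p)) => //; rewrite muln0.
have Hx : (X %/ d < dh (col e))%N by rewrite ltn_divLR.
have Hy : (X %% d < d)%N by rewrite ltn_mod.
pose rhog y' := nent (tens rho (map col p) g) (X %% d) y'.
transitivity (\sum_(a' < dim (rng e)) \sum_(x' < dh (col e)) \sum_(y' < d)
   (nent (pi (rng e) g) a a' * nent (rho (col e) g) (X %/ d) x' * rhog y') *
   (\sum_(c < dim (src e)) TE e a' x' c * TP p c y' b)).
  apply: eq_bigr => a' _; rewrite sum_tens_index; apply: eq_bigr => x' _.
  apply: eq_bigr => y' _; rewrite mxtens_indexE nent_tens ?ltn_tens_index //.
  by rewrite !divn_tens_index // !modn_tens_index // !mulrA.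
rewrite (sum_tensor_compose _ _ _ _ (nent (pi (rng e) g) a)
  (nent (rho (col e) g) (X %/ d)) rhog (TE e) (fun c y => TP p c y b)).
transitivity (\sum_(c < dim (src e))
   (\sum_(c' < dim (src e)) TE e a (X %/ d) c' * nent (pi (src e) g) c' c) *
   (\sum_(y' < d) rhog y' * TP p c y' b)).
  by apply: eq_bigr => c _; rewrite edge_intw.
rewrite -(sum_mulA _ _ (TE e a (X %/ d)) (fun c => \sum_(y' < d) rhog y' * TP p c y' b)
  (fun c' c => nent (pi (src e) g) c' c)).
transitivity (\sum_(c' < dim (src e)) TE e a (X %/ d) c' *
   \sum_(b' < dim (PS (src e) p)) TP p c' (X %% d) b' * nent (pi (PS (src e) p) g) b' b).
  apply: eq_bigr => c' _; congr (_ * _); rewrite -IH //.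
  by apply: eq_bigr => c _; rewrite mulr_sumr; apply: eq_bigr => y _; rewrite mulrA.
exact: (sum_mulA _ _ (TE e a (X %/ d)) (fun b' => nent (pi (PS (src e) p) g) b' b)
  (fun c' b' => TP p c' (X %% d) b')).
Qed.

End PathOperators.

Section Basis.
Variable R : realType.
Local Notation C := (R[i]).
Variable G : topologicalType.
Variables (mul : G -> G -> G) (one : G).
Variable k : nat.
Variable dh : 'I_k -> nat.
Variable rho : forall i : 'I_k, G -> 'M[C]_(dh i).
Variable V : Type.
Variable dim : V -> nat.
Variable pi : forall v : V, G -> 'M[C]_(dim v).
Variable iota : V.
Variable E : eqType.
Variables (src rng : E -> V) (col : E -> 'I_k).
Variable T : forall e : E, 'M[C]_(dim (rng e) * dh (col e), dim (src e)).
Hypothesis Hrho : forall i, unitary_rep mul one (rho i).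
Hypothesis HV : vertices_ok mul one rho pi iota.
Hypothesis HE : edges_ok rho pi T.

Local Notation TP := (Tp T).
Local Notation PS := (psrc src).
Local Notation DM := (dims dh).
Local Notation paths cs := (paths HE cs iota).

Lemma dim_iota : dim iota = 1%N.
Proof. by case: HV. Qed.

Lemma pi_iota g : pi iota g = 1%:M.
Proof. by case: HV. Qed.

Lemma vertex_unitary v : unitary_rep mul one (pi v).
Proof. by case: HV => H _ _ _ _; case: (H v). Qed.

Lemma vertex_irreducible v : irreducible (pi v).
Proof. by case: HV => H _ _ _ _; case: (H v). Qed.

Lemma dim_vertex_gt0 v : (0 < dim v)%N.
Proof. by case: (vertex_irreducible v). Qed.

Lemma vertex_intw_scalar v (X : 'M[C]_(dim v, dim v)) : intw (pi v) (pi v) X ->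
  exists c, forall i j, nent X i j = c * ((i == j) && (i < dim v))%N%:R.
Proof.
move=> HX; have [c ->] := schur_scalar (vertex_irreducible v) HX.
by exists c => i j; rewrite -scalemx1 nent_scale nent1.
Qed.

Lemma vertex_intw_zero v w (X : 'M[C]_(dim v, dim w)) :
  v <> w -> intw (pi w) (pi v) X -> X = 0.
Proof.
move=> Hvw HX; apply/eqP/negPn/negP => X0.
have := schur_equiv (vertex_unitary w) (vertex_unitary v) (vertex_irreducible w)
  (vertex_irreducible v) HX X0.
by case: HV => _ H _ _ _; apply: H => Ewv; apply: Hvw.
Qed.

Lemma tens_unitary s g : tens rho s g *m adjmx (tens rho s g) = 1%:M.
Proof.
elim: s => [|c s IH] /=; first by rewrite adjmx1 mulmx1.
by rewrite adjmx_tens tensmx_mul IH (proj2 (Hrho c) g) tensmx11.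
Qed.

Definition pathmx cs (p : seq E) d : 'M[C]_(DM cs, d) :=
  \matrix_(X < DM cs, b < d) TP p 0 X b.

Local Notation Tl cs p := (pathmx cs p (dim (PS iota p))).

Lemma nent_pathmx cs p d X b : (X < DM cs)%N -> (b < d)%N ->
  nent (pathmx cs p d) X b = TP p 0 X b.
Proof. by move=> HX Hb; rewrite nentE_lt mxE. Qed.

(* [T_λ^* T_μ = δ_{λ,μ} 1], columns beyond [dim s(λ)] being zero. *)
Lemma pathmx_orth cs lam mu d d' : lam \in paths cs -> mu \in paths cs ->
  adjmx (pathmx cs lam d) *m pathmx cs mu d' =
  \matrix_(b < d, b' < d') ((lam == mu) && (b == b' :> nat) && (b < dim (PS iota lam))%N)%:R.
Proof.
move=> /mem_paths [Hl Hcl] /mem_paths [Hm Hcm].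
have Hi0 : (0 < dim iota)%N by rewrite dim_iota.
apply/matrixP => b b'; rewrite !mxE.
have -> : \sum_(X < DM cs) adjmx (pathmx cs lam d) b X * pathmx cs mu d' X b'
  = \sum_(a < dim iota) \sum_(X < DM (map col lam)) (TP lam a X b)^* * TP mu a X b'.
  by rewrite dim_iota big_ord1 Hcl; apply: eq_bigr => X _; rewrite /adjmx !mxE.
case: (ltnP b (dim (PS iota lam))) => Hb; last first.
  rewrite andbF big1 // => a _; rewrite big1 // => X _.
  by rewrite (Tp_out T (v:=iota)) ?conjC0 ?mul0r // dim_iota.
case: (ltnP b' (dim (PS iota mu))) => Hb'; last first.
  rewrite big1; last first.
    move=> a _; rewrite big1 // => X _.
    by rewrite (Tp_out T (v:=iota) (p:=mu)) ?mulr0 // dim_iota.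
  case: (lam =P mu) => [El|//]; case: (@eqP nat b b') => [Eb|]; last by rewrite andbF.
  by rewrite El Eb in Hb; move: (leq_trans Hb Hb'); rewrite ltnn.
by rewrite (path_orth HE (v:=iota) (q:=mu)) ?andbT // Hcl Hcm.
Qed.

Lemma nent_pathmx_orth cs lam mu d d' b c : lam \in paths cs -> mu \in paths cs ->
  (b < d)%N -> (c < d')%N ->
  nent (adjmx (pathmx cs lam d) *m pathmx cs mu d') b c =
  ((lam == mu) && (b == c) && (b < dim (PS iota lam))%N)%:R.
Proof. by move=> Hl Hm Hb Hc; rewrite pathmx_orth // nentE_lt mxE. Qed.

Lemma pathmx_isometry cs lam d : lam \in paths cs -> d = dim (PS iota lam) ->
  adjmx (pathmx cs lam d) *m pathmx cs lam d = 1%:M.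
Proof.
move=> Hl Hd; rewrite pathmx_orth //; apply/matrixP => b b'; rewrite !mxE eqxx /=.
by rewrite -Hd ltn_ord andbT.
Qed.

Lemma pathmx_complete cs :
  \sum_(p <- paths cs) Tl cs p *m adjmx (Tl cs p) = 1%:M.
Proof.
apply: eq_nent => X X' HX HX'.
have Hi0 : (0 < dim iota)%N by rewrite dim_iota.
rewrite nent_sum nent1 HX andbT -[X == X']/((0 == 0)%N && (X == X')).
rewrite -(paths_complete HE (s:=cs) (v:=iota)) //.
apply: eq_bigr => p _; rewrite nent_mul; apply: eq_bigr => b _.
by rewrite nent_adj !nent_pathmx.
Qed.

Lemma pathmx_intw cs p g : p \in paths cs ->
  tens rho cs g *m Tl cs p = Tl cs p *m pi (PS iota p) g.
Proof.
move=> /mem_paths [Hch Hcol]; apply: eq_nent => X b HX Hb.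
have Hi0 : (0 < dim iota)%N by rewrite dim_iota.
rewrite !nent_mul.
transitivity (\sum_(a' < dim iota) \sum_(X' < DM (map col p))
    nent (pi iota g) 0 a' * nent (tens rho (map col p) g) X X' * TP p a' X' b).
  rewrite pi_iota; transitivity (\sum_(a' < dim iota) ((0 == a' :> nat)%:R *
    \sum_(X' < DM (map col p)) nent (tens rho (map col p) g) X X' * TP p a' X' b)).
    rewrite (sum_delta_l (fun a' => \sum_(X' < DM (map col p))
      nent (tens rho (map col p) g) X X' * TP p a' X' b) Hi0) Hcol.
    by apply: eq_bigr => X' _; rewrite nent_pathmx.
  apply: eq_bigr => a' _; rewrite mulr_sumr; apply: eq_bigr => X' _.
  by rewrite nent1 Hi0 andbT mulrA.
rewrite (path_intw HE) ?Hcol //.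
by apply: eq_bigr => b' _; rewrite nent_pathmx // Hcol.
Qed.

Lemma pathmx_adj_intw cs p g : p \in paths cs ->
  pi (PS iota p) g *m adjmx (Tl cs p) = adjmx (Tl cs p) *m tens rho cs g.
Proof.
move=> Hp; apply: (@intw_adj _ _ _ _ (pi (PS iota p)) (tens rho cs)) => //.
- by move=> h; case: (vertex_unitary (PS iota p)) => _; apply.
- exact: tens_unitary.
- by move=> h; apply: pathmx_intw.
Qed.

Lemma TT_factor m n lam mu :
  TT iota T m n lam mu = Tl (colors m) lam *m adjmx (pathmx (colors n) mu (dim (PS iota lam))).
Proof. by apply/matrixP => X Y; rewrite !mxE; apply: eq_bigr => b _; rewrite /adjmx !mxE. Qed.

Definition basis_pairs m n : seq (seq E * seq E) :=
  [seq q <- [seq (l, u) | l <- paths (colors m), u <- paths (colors n)]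
     | `[< PS iota q.1 = PS iota q.2 >]].

Lemma mem_basis_pairs m n q : q \in basis_pairs m n <->
  [/\ q.1 \in paths (colors m), q.2 \in paths (colors n) & PS iota q.1 = PS iota q.2].
Proof.
rewrite mem_filter; split.
  by case/andP => /asboolP H /allpairsP [[l u] [Hl Hu Eq]]; subst q; split.
case=> Hl Hu H; apply/andP; split; first exact/asboolP.
by apply/allpairsP; exists q; split => //; case: q {Hl Hu H}.
Qed.

Lemma basis_pairs_uniq m n : uniq (basis_pairs m n).
Proof.
apply/filter_uniq/allpairs_uniq; try exact: paths_uniq.
by move=> [? ?] [? ?] _ _ /= [-> ->].
Qed.

Lemma TT_intw m n l u : l \in paths (colors m) -> u \in paths (colors n) ->
  PS iota l = PS iota u -> intw (rhopow rho n) (rhopow rho m) (TT iota T m n l u).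
Proof.
move=> Hl Hu Heq g; rewrite TT_factor /rhopow mulmxA pathmx_intw // -!mulmxA.
by rewrite Heq pathmx_adj_intw.
Qed.

(* [T_λ T_μ^*] is a partial isometry since [T_λ] and [T_μ] are isometries. *)
Lemma TT_partial_isometry m n l u : l \in paths (colors m) -> u \in paths (colors n) ->
  PS iota l = PS iota u -> partial_isometry (TT iota T m n l u).
Proof.
move=> Hl Hu Heq; rewrite /partial_isometry TT_factor adjmxM adjmxK !mulmxA.
have isoU : adjmx (pathmx (colors n) u (dim (PS iota l))) *m
    pathmx (colors n) u (dim (PS iota l)) = 1%:M by apply: pathmx_isometry; rewrite ?Heq.
rewrite -(mulmxA _ _ (pathmx _ u _)) isoU mulmx1.
by rewrite -(mulmxA _ _ (Tl _ l)) pathmx_isometry // mulmx1.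
Qed.

Lemma compress_intw m n A l u : intw (rhopow rho n) (rhopow rho m) A ->
  l \in paths (colors m) -> u \in paths (colors n) ->
  intw (pi (PS iota u)) (pi (PS iota l)) (adjmx (Tl (colors m) l) *m A *m Tl (colors n) u).
Proof.
move=> HA Hl Hu g; rewrite !mulmxA pathmx_adj_intw // -(mulmxA (adjmx _) _ A).
by rewrite HA !mulmxA -(mulmxA _ _ (Tl _ u)) pathmx_intw // mulmxA.
Qed.

(* Each term [T_λ (T_λ^* A T_μ) T_μ^*] of the expansion of an intertwiner
   [A] lies in the span of the [T_λ T_μ^*], by Schur's lemma. *)
Lemma expansion_term_in_span m n A l u : intw (rhopow rho n) (rhopow rho m) A ->
  l \in paths (colors m) -> u \in paths (colors n) ->
  Tl (colors m) l *m (adjmx (Tl (colors m) l) *m A *m Tl (colors n) u) *m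
    adjmx (Tl (colors n) u)
  \in <<[seq TT iota T m n q.1 q.2 | q <- basis_pairs m n]>>%VS.
Proof.
move=> HA Hl Hu; have HB := compress_intw HA Hl Hu.
set B := adjmx (Tl (colors m) l) *m A *m Tl (colors n) u in HB *.
case: (pselect (PS iota l = PS iota u)) => Heq; last first.
  by rewrite (vertex_intw_zero Heq HB) mulmx0 mul0mx mem0v.
move: B HB; rewrite -Heq => B HB; have [c Hc] := vertex_intw_scalar HB.
have -> : Tl (colors m) l *m B *m adjmx (pathmx (colors n) u (dim (PS iota l)))
          = c *: TT iota T m n l u.
  apply: eq_nent => X Y HX HY; rewrite TT_factor nent_scale !nent_mul mulr_sumr.
  apply: eq_bigr => b Hb; rewrite nent_mul mulrA; congr (_ * _).
  rewrite (bigD1 b) //= big1 => [|b' Hb']; last first.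
    by rewrite Hc [_ == _](negbTE Hb') mulr0 mulr0.
  by rewrite addr0 Hc eqxx ltn_ord nent_pathmx // mulr1 mulrC.
by apply/memvZ/memv_span/mapP; exists (l, u) => //; apply/mem_basis_pairs.
Qed.

(* Spanning: [A = (Σ_λ T_λ T_λ^* ) A (Σ_μ T_μ T_μ^* )], expanded termwise. *)
Lemma TT_span m n A : intw (rhopow rho n) (rhopow rho m) A ->
  A \in <<[seq TT iota T m n q.1 q.2 | q <- basis_pairs m n]>>%VS.
Proof.
move=> HA; rewrite -[A]mul1mx -[A]mulmx1 -{1}(pathmx_complete (colors m)).
rewrite -(pathmx_complete (colors n)) mulmx_suml big_seq; apply: memv_suml => l Hl.
rewrite !mulmx_sumr big_seq; apply: memv_suml => u Hu.
have -> : Tl (colors m) l *m adjmx (Tl (colors m) l) *m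
    (A *m (Tl (colors n) u *m adjmx (Tl (colors n) u)))
  = Tl (colors m) l *m (adjmx (Tl (colors m) l) *m A *m Tl (colors n) u) *m
    adjmx (Tl (colors n) u) by rewrite !mulmxA.
exact: expansion_term_in_span.
Qed.

Lemma TT_compress m n l0 u0 l u :
  l0 \in paths (colors m) -> u0 \in paths (colors n) ->
  l \in paths (colors m) -> u \in paths (colors n) -> PS iota l = PS iota u ->
  nent (adjmx (Tl (colors m) l0) *m TT iota T m n l u *m Tl (colors n) u0) 0 0
  = ((l0, u0) == (l, u))%:R.
Proof.
move=> Hl0 Hu0 Hl Hu Heq.
rewrite TT_factor !mulmxA -(mulmxA _ (adjmx _) (Tl (colors n) u0)) nent_mul.
have P0 := dim_vertex_gt0 (PS iota l).
rewrite (bigD1 (Ordinal P0)) //= big1 ?addr0; last first.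
  move=> c Hc; rewrite nent_pathmx_orth ?dim_vertex_gt0 //.
  have -> : (0 == c :> nat) = false.
    by apply/negP => /eqP c0; move: Hc; rewrite -val_eqE /= -c0 eqxx.
  by rewrite andbF mul0r.
rewrite !nent_pathmx_orth ?dim_vertex_gt0 //= !andbT -natrM mulnb.
by rewrite xpair_eqE [u == u0]eq_sym.
Qed.

Lemma TT_free m n : free [seq TT iota T m n q.1 q.2 | q <- basis_pairs m n].
Proof.
set S := basis_pairs m n; set F := fun q : seq E * seq E => TT iota T m n q.1 q.2.
have sizeS (i : 'I_(size (map F S))) : (i < size S)%N by rewrite -(size_map F).
apply/(@freeP _ _ _ (in_tuple (map F S))) => kk Hk j.
set q := nth ([::], [::]) S j.
have [Hl Hu Heq] := (mem_basis_pairs m n q).1 (mem_nth _ (sizeS j)).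
have := congr1 (fun M => nent (adjmx (Tl (colors m) q.1) *m M *m Tl (colors n) q.2) 0 0) Hk.
rewrite /= mulmx_sumr mulmx_suml nent_sum mulmx0 mul0mx nent0.
under eq_bigr => i _.
  rewrite -scalemxAr -scalemxAl nent_scale (nth_map ([::], [::])) ?sizeS //.
  have [Hli Hui Heqi] := (mem_basis_pairs m n _).1 (mem_nth ([::], [::]) (sizeS i)).
  rewrite TT_compress // -!surjective_pairing; over.
rewrite (bigD1 j) //= /q eqxx mulr1 big1 ?addr0 // => i Hij.
by rewrite nth_uniq ?basis_pairs_uniq ?sizeS // eq_sym [_ == _](negbTE Hij) mulr0.
Qed.

End Basis.

Theorem proposition4p2
  (R : realType) (G : topologicalType)
  (mul : G -> G -> G) (inv : G -> G) (one : G)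
  (k : nat) (dh : 'I_k -> nat) (rho : forall i : 'I_k, G -> 'M[R[i]]_(dh i))
  (V : Type) (dim : V -> nat) (pi : forall v : V, G -> 'M[R[i]]_(dim v)) (iota : V)
  (E : eqType) (src rng : E -> V) (col : E -> 'I_k)
  (T : forall e : E, 'M[R[i]]_(dim (rng e) * dh (col e), dim (src e))) :
  compact_group mul inv one ->
  (forall i, unitary_rep mul one (rho i) /\ continuous_rep (rho i)) ->
  vertices_ok mul one rho pi iota ->
  edges_ok rho pi T ->
  kgraph_ok T ->
  forall m n : 'I_k -> nat,
  exists s : seq (seq E * seq E),
    [/\ uniq s,
        (forall q, q \in s <->
           [/\ iota_path iota src rng col m q.1, iota_path iota src rng col n q.2
             & psrc src iota q.1 = psrc src iota q.2]),
        hom_basis (rhopow rho n) (rhopow rho m)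
          [seq TT iota T m n q.1 q.2 | q <- s] &
        (forall q, q \in s -> partial_isometry (TT iota T m n q.1 q.2))].
Proof.
move=> _ Hrho HV HE _ m n.
have urho i := (Hrho i).1.
exists (basis_pairs iota HE m n); split.
- exact: basis_pairs_uniq.
- move=> q; split.
    by case/mem_basis_pairs => /mem_paths [? ?] /mem_paths [? ?] ?.
  by case=> [[? ?] [? ?] ?]; apply/mem_basis_pairs; split => //; apply/mem_paths.
- split; last exact: (TT_free HV).
  + by move=> _ /mapP [q /mem_basis_pairs [Hl Hu Heq] ->]; apply: (TT_intw urho HV).
  + by move=> A; apply: (TT_span urho HV).
- by move=> q /mem_basis_pairs [Hl Hu Heq]; apply: (TT_partial_isometry HV).
Qed.
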